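(* For every prime power $q$, all integers $n$, $r\le\lfloor n/2\rfloor$ and $0<\rho<r$, $$K_{\mathrm{C}}(q,n,r,\rho)\le \left\{1 - \log_{{n\brack r}}\left({n\brack r} - V_{\mathrm{C}}(\rho)\right)\right\}^{-1} + 1.$$
   Context: ${m\brack k}=\prod_{i=0}^{k-1}\frac{q^m-q^i}{q^k-q^i}$ is the Gaussian binomial. $N_{\mathrm{C}}(d) = q^{d^2}{r\brack d}{n-r \brack d}$ and $V_{\mathrm{C}}(t)=\sum_{d=0}^t N_{\mathrm{C}}(d)$. $E_r(q,n)$ is the set of $r$-dimensional subspaces of $\mathrm{GF}(q)^n$ with injection distance $d_{\mathrm{I}}(U,V)=\dim(U+V)-\min\{\dim U,\dim V\}$; the covering radius of a nonempty $\mathcal{C}\subseteq E_r(q,n)$ is $\max_U\min_{C\in\mathcal{C}}d_{\mathrm{I}}(U,C)$, and $K_{\mathrm{C}}(q,n,r,\rho)$ is the minimum cardinality of a subset of $E_r(q,n)$ with covering radius at most $\rho$. *)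

From HB Require Import structures.
From mathcomp Require Import all_boot all_order all_algebra.
From mathcomp Require Import all_classical all_reals exp.
Set Implicit Arguments. Unset Strict Implicit. Unset Printing Implicit Defensive.
Import Order.TTheory GRing.Theory Num.Theory.

Local Open Scope ring_scope.

Definition gauss_binom (R : realType) (q m k : nat) : R :=
  \prod_(i < k) ((q%:R ^+ m - q%:R ^+ i) / (q%:R ^+ k - q%:R ^+ i)).

Definition NC (R : realType) (q n r d : nat) : R :=
  (q%:R ^+ (d * d)%N) * gauss_binom R q r d * gauss_binom R q (n - r) d.

Definition VC (R : realType) (q n r t : nat) : R :=
  \sum_(0 <= d < t.+1) NC R q n r d.

Definition logb (R : realType) (b x : R) : R := ln x / ln b.

Local Close Scope ring_scope.

(* Subspaces of GF(q)^n are represented by their canonical generator matrices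
   <<U>>%MS : 'M[F]_n (rows span the subspace); \rank U is the dimension. *)
Definition Er (F : finFieldType) (n r : nat) : {set 'M[F]_n} :=
  [set U : 'M[F]_n | (<<U>>%MS == U) && (\rank U == r)].

Definition dI (F : finFieldType) (n : nat) (U V : 'M[F]_n) : nat :=
  \rank (U + V)%MS - minn (\rank U) (\rank V).

(* covering radius of a (nonempty) C within E_r(q,n):
   max_{U in E_r} min_{c in C} d_I(U,c)  (the default n of the inner min is
   harmless since d_I <= n). *)
Definition covrad (F : finFieldType) (n r : nat) (C : {set 'M[F]_n}) : nat :=
  \max_(U in Er F n r) \big[minn/n]_(c in C) dI U c.

(* K_C(q,n,r,rho): minimum cardinality of a nonempty C subset of E_r(q,n) with
   covering radius at most rho (default #|E_r| is irrelevant whenever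
   r <= n, since E_r itself then has covering radius 0). *)
Definition KC (F : finFieldType) (n r rho : nat) : nat :=
  \big[minn/#|Er F n r|]_(C in powerset (Er F n r) |
                            (C != finset.set0) && (covrad r C <= rho)) #|C|.

From mathcomp Require Import all_boot all_order all_algebra.
From mathcomp Require Import all_classical all_reals exp.
From mathcomp Require Import zify ring.
Set Implicit Arguments. Unset Strict Implicit. Unset Printing Implicit Defensive.
Import Order.TTheory GRing.Theory Num.Theory.

(** Every U in E_r(q,n), a set of [n brack r] subspaces,
   lies in the balls of radius rho around at least V = V_C(rho) centers: the
   subspaces W at distance d from U are the spans of r-d independent vectors
   of U together with d vectors independent modulo U, each W arises from at
   most as many such frames as there are frames of U :&: W completed inside W,
   and the ratio of the two counts is N_C(d).  Hence a center covering the most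
   uncovered subspaces leaves at most a fraction 1 - V/|E| of them uncovered;
   after k steps at most |E| (1 - V/|E|)^k remain, which is below 1 once k
   exceeds ln |E| / (ln |E| - ln (|E| - V)). *)

Section SubspaceCounting.
Variables (F : finFieldType) (n : nat).
Local Notation q := #|F|.

Lemma card_submx_row m (A : 'M[F]_(m, n)) :
  #|[set v : 'rV[F]_n | (v <= A)%MS]| = (q ^ \rank A)%N.
Proof.
rewrite -[\rank A]mul1n -card_mx.
have /row_freeP[B baseK] := row_base_free A.
have inj_base k : injective (@mulmxr F k _ _ (row_base A)).
  by apply: can_inj (mulmxr B) _ => u; rewrite /= -mulmxA baseK mulmx1.
rewrite -(fintype.card_image (inj_base _)); apply: eq_card => v.
by rewrite inE -(eq_row_base A) (sameP submxP codomP).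
Qed.

Lemma card_submx_rowD (X T : 'M[F]_n) : (X <= T)%MS ->
  #|[set v : 'rV[F]_n | (v <= T)%MS && ~~ (v <= X)%MS]| =
  (q ^ \rank T - q ^ \rank X)%N.
Proof.
move=> sXT.
have sub_set : [set v : 'rV[F]_n | (v <= X)%MS] \subset [set v | (v <= T)%MS].
  by apply/fintype.subsetP => v; rewrite !inE => /submx_trans->.
have -> : [set v : 'rV[F]_n | (v <= T)%MS && ~~ (v <= X)%MS] =
          [set v | (v <= T)%MS] :\: [set v | (v <= X)%MS].
  by apply/setP => v; rewrite !inE andbC.
by rewrite cardsD (finset.setIidPr sub_set) !card_submx_row.
Qed.

Lemma mxrank_adds_col_mx (S : 'M[F]_n) m (D : 'M[F]_(m, n)) (v : 'rV[F]_n) :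
  (\rank (S + col_mx v D)%MS == \rank S + m.+1)%N =
  (\rank (S + D)%MS == \rank S + m)%N && ~~ (v <= S + D)%MS.
Proof.
have -> : (S + col_mx v D :=: (S + D) + v)%MS.
  apply/eqmxP; rewrite -!addsmxA; apply/andP; split; apply: addsmxS => //.
    by rewrite addsmxC -addsmxE.
  by rewrite addsmxC -addsmxE.
have rSD : (\rank (S + D)%MS <= \rank S + m)%N.
  by apply: leq_trans (mxrank_adds_leqif S D) _; rewrite leq_add2l rank_leq_row.
have rSDv : (\rank (S + D + v)%MS <= (\rank (S + D)%MS).+1)%N.
  apply: leq_trans (mxrank_adds_leqif _ v) _.
  by rewrite -(addn1 (\rank (S + D)%MS)) leq_add2l rank_leq_row.
have [vSD | vNSD] := boolP (v <= S + D)%MS.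
  rewrite (addsmx_idPl vSD) andbF; apply/negbTE.
  by rewrite neq_ltn addnS ltnS rSD.
have -> : \rank (S + D + v)%MS = (\rank (S + D)%MS).+1.
  apply/anti_leq; rewrite rSDv.
  by rewrite (ltn_leqif (mxrank_leqif_sup (addsmxSl _ v))) addsmx_sub submx_refl.
by rewrite andbT addnS eqSS.
Qed.

Definition frames_ext (S T : 'M[F]_n) m :=
  [set A : 'M[F]_(m, n) | (A <= T)%MS && (\rank (S + A)%MS == \rank S + m)%N].

Lemma card_frames_ext (S T : 'M[F]_n) m : (S <= T)%MS ->
  #|frames_ext S T m| = (\prod_(j < m) (q ^ \rank T - q ^ (\rank S + j)))%N.
Proof.
move=> sST; elim: m => [|m IH].
  rewrite big_ord0 (@fintype.eq_card1 _ (0%R : 'M[F]_(0, n))) // => A.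
  by rewrite !inE [A]flatmx0 sub0mx addsmx0 addn0 !eqxx.
rewrite big_ord_recr /= -IH -[#|frames_ext S T m.+1|]sum1_card.
rewrite (partition_big (@dsubmx F 1 m n) (mem (frames_ext S T m))) /=; last first.
  move=> A; rewrite !inE -(vsubmxK A) col_mxKd (@col_mx_sub F 1 m n).
  rewrite mxrank_adds_col_mx.
  by case/andP=> /andP[_ ->] /andP[-> _].
rewrite -sum_nat_const; apply: eq_bigr => D; rewrite inE => /andP[sDT rD].
rewrite (reindex (fun v : 'rV[F]_n => col_mx v D)) /=; last first.
  exists usubmx => [v _ | A]; first by rewrite col_mxKu.
  by rewrite inE => /andP[_ /eqP <-]; rewrite vsubmxK.
rewrite -(eqP rD) -card_submx_rowD; last by rewrite addsmx_sub sST.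
rewrite -sum1_card; apply: eq_bigl => v.
rewrite !inE col_mxKd eqxx andbT (@col_mx_sub F 1 m n) sDT andbT.
by rewrite mxrank_adds_col_mx rD.
Qed.

Lemma genmx_eq_full_rank r (W : 'M[F]_n) (A : 'M[F]_(r, n)) :
  W \in Er F n r -> \rank A = r -> (<<A>>%MS == W) = (A <= W)%MS.
Proof.
rewrite inE => /andP[/eqP genW /eqP rW] rA.
apply/idP/idP => [/eqP <- | sAW]; first by rewrite genmxE.
rewrite -genW; apply/eqP/eq_genmx/eqmxP.
by rewrite -(geq_leqif (mxrank_leqif_eq sAW)) rA rW.
Qed.

Lemma card_Er_mul r :
  (#|Er F n r| * \prod_(j < r) (q ^ r - q ^ j) = \prod_(j < r) (q ^ n - q ^ j))%N.
Proof.
have -> : (\prod_(j < r) (q ^ n - q ^ j) = #|frames_ext 0%R 1%:M%R r|)%N.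
  by rewrite card_frames_ext ?sub0mx // mxrank1 mxrank0.
rewrite -[#|frames_ext _ _ r|]sum1_card.
rewrite (partition_big (fun A : 'M[F]_(r, n) => <<A>>%MS) (mem (Er F n r))) /=;
  last by move=> A; rewrite !inE adds0mx genmx_id eqxx mxrank_gen mxrank0; case/andP.
rewrite -sum_nat_const; apply: eq_bigr => W EW.
have := EW; rewrite inE => /andP[_ /eqP rW].
transitivity #|frames_ext 0%R W r|.
  by rewrite card_frames_ext ?sub0mx // rW mxrank0.
rewrite -sum1_card; apply: eq_bigl => A.
rewrite !inE submx1 adds0mx mxrank0 add0n andbC.
by have [rA|] := eqVneq (\rank A) r; rewrite ?andbF //= genmx_eq_full_rank.
Qed.

End SubspaceCounting.

Section Spheres.
Variables (F : finFieldType) (n r : nat) (U : 'M[F]_n) (d : nat).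
Hypotheses (EU : U \in Er F n r) (d_le_r : (d <= r)%N).
Local Notation q := #|F|.

Definition sphere := [set W in Er F n r | dI U W == d].

Definition sphere_frames :=
  finset.setX (frames_ext 0%R U (r - d)) (frames_ext U 1%:M%R d).

Definition frames_span (p : 'M[F]_(r - d, n) * 'M[F]_(d, n)) : 'M[F]_n :=
  <<col_mx p.1 p.2>>%MS.

Definition fiber_bound :=
  (\prod_(j < r - d) (q ^ (r - d) - q ^ j) *
   \prod_(j < d) (q ^ r - q ^ (r - d + j)))%N.

Lemma rank_Er : \rank U = r.
Proof. by move: EU; rewrite inE => /andP[_ /eqP]. Qed.

Lemma sphere_framesP p : p \in sphere_frames ->
  [/\ (p.1 <= U)%MS, \rank p.1 = (r - d)%N, \rank p.2 = d &
      \rank (U :&: p.2)%MS = 0%N].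
Proof.
rewrite !inE adds0mx mxrank0 => /andP[/andP[sU /eqP r1] /andP[_ /eqP r2]].
have := mxrank_sum_cap U p.2; rewrite r2 -addnA => /addnI.
by have := rank_leq_row p.2; split=> //; lia.
Qed.

Lemma frames_span_sphere p : p \in sphere_frames -> frames_span p \in sphere.
Proof.
move=> /sphere_framesP[sU r1 r2 capU].
have r_span : \rank (frames_span p) = r.
  rewrite mxrank_gen -addsmxE.
  have cap12 : \rank (p.1 :&: p.2)%MS = 0%N.
    apply/eqP; rewrite -leqn0 -capU mxrankS // sub_capmx capmxSr andbT.
    exact: submx_trans (capmxSl _ _) sU.
  by have := mxrank_sum_cap p.1 p.2; rewrite cap12 addn0 r1 r2 subnK.
have U_span : (U + frames_span p :=: U + p.2)%MS.
  apply/eqmxP/andP; rewrite /frames_span !addsmx_sub addsmxSl; split.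
    by rewrite genmxE -addsmxE addsmx_sub addsmxSr (submx_trans sU) ?addsmxSl.
  by rewrite addsmxSl (submx_trans _ (addsmxSr U _)) // genmxE -addsmxE addsmxSr.
have rUp2 : \rank (U + p.2)%MS = (r + d)%N.
  by have := mxrank_sum_cap U p.2; rewrite capU addn0 rank_Er r2.
rewrite !inE /dI U_span rUp2 r_span rank_Er minnn /frames_span genmx_id.
by rewrite !eqxx /= addKn.
Qed.

Lemma sphereP W : W \in sphere ->
  \rank W = r /\ \rank (U :&: W)%MS = (r - d)%N.
Proof.
rewrite !inE /dI => /andP[/andP[_ /eqP rW] /eqP dW].
move: dW; rewrite rW rank_Er minnn => dW.
have rUW : (r <= \rank (U + W)%MS)%N by rewrite -{1}rank_Er mxrankS ?addsmxSl.
by split=> //; have := mxrank_sum_cap U W; rewrite rank_Er rW; lia.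
Qed.

Lemma frames_span_fiber W p : p \in sphere_frames ->
  frames_span p = W ->
  p \in finset.setX (frames_ext 0%R (U :&: W)%MS (r - d)) (frames_ext (U :&: W)%MS W d).
Proof.
move=> Sp spanW; have [sU _ r2 capU] := sphere_framesP Sp.
have sW1 : (p.1 <= W)%MS by rewrite -spanW genmxE -addsmxE addsmxSl.
have sW2 : (p.2 <= W)%MS by rewrite -spanW genmxE -addsmxE addsmxSr.
move: (Sp); rewrite !inE sub_capmx sU sW1 sW2 => /andP[/andP[_ ->] _] /=.
have capUW : \rank ((U :&: W) :&: p.2)%MS = 0%N.
  apply/eqP; rewrite -leqn0 -capU mxrankS // sub_capmx capmxSr andbT.
  exact: submx_trans (capmxSl _ _) (capmxSl _ _).
by have := mxrank_sum_cap (U :&: W)%MS p.2; rewrite capUW addn0 r2 => ->.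
Qed.

Lemma card_frames_span_fiber W : W \in sphere ->
  (#|[set p in sphere_frames | frames_span p == W]| <= fiber_bound)%N.
Proof.
move=> SW; have [rW rcap] := sphereP SW.
apply: leq_trans (subset_leq_card (_ : _ \subset
  finset.setX (frames_ext 0%R (U :&: W)%MS (r - d)) (frames_ext (U :&: W)%MS W d))) _.
  apply/fintype.subsetP => p; rewrite inE => /andP[Sp /eqP spanW].
  exact: frames_span_fiber.
rewrite cardsX !card_frames_ext ?sub0mx ?capmxSr // rW rcap mxrank0.
by under eq_bigr do rewrite add0n.
Qed.

Lemma card_sphere_frames : #|sphere_frames| =
  (\prod_(j < r - d) (q ^ r - q ^ j) * \prod_(j < d) (q ^ n - q ^ (r + j)))%N.
Proof.
rewrite cardsX !card_frames_ext ?sub0mx ?submx1 // mxrank1 mxrank0 rank_Er.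
by under eq_bigr do rewrite add0n.
Qed.

Lemma card_sphere_frames_le : (#|sphere_frames| <= #|sphere| * fiber_bound)%N.
Proof.
rewrite -sum1_card (partition_big frames_span (mem sphere)) /=;
  last exact: frames_span_sphere.
rewrite -sum_nat_const; apply: leq_sum => W SW.
apply: leq_trans (card_frames_span_fiber SW); rewrite -sum1_card.
by apply: eq_leq; apply: eq_bigl => p; rewrite inE.
Qed.

End Spheres.

Lemma card_ball (F : finFieldType) n r (U : 'M[F]_n) t :
  #|[set c in Er F n r | (dI U c <= t)%N]| =
  (\sum_(0 <= d < t.+1) #|sphere r U d|)%N.
Proof.
elim: t => [|t IH]; first by rewrite big_nat1; apply: eq_card => c; rewrite !inE leqn0.
rewrite big_nat_recr //= -IH -(cardsID [set c in Er F n r | (dI U c <= t)%N]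
  [set c in Er F n r | (dI U c <= t.+1)%N]).
congr (_ + _)%N; apply: eq_card => c; rewrite !inE;
  by case: (c \in Er F n r) => //=; case: ltngtP => //; lia.
Qed.

Section QProducts.
Variables (K : fieldType) (x : K).
Local Open Scope ring_scope.
Hypothesis x_neq0 : x != 0.

Definition qprod_from (t a m : nat) : K := \prod_(j < m) (x ^+ t - x ^+ (a + j)).
Definition qprod (t m : nat) : K := \prod_(j < m) (x ^+ t - x ^+ j).
Definition qbinom (m k : nat) : K := qprod m k / qprod k k.

Lemma qprod_fromE t a m : (a <= t)%N ->
  qprod_from t a m = x ^+ (a * m) * qprod (t - a) m.
Proof.
move=> a_le_t; rewrite /qprod_from /qprod.
transitivity (\prod_(j < m) (x ^+ a * (x ^+ (t - a) - x ^+ j))).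
  by apply: eq_bigr => j _; rewrite mulrBr -!exprD subnKC.
by rewrite big_split /= prodr_const card_ord exprM.
Qed.

Lemma qprodD t k l : (k <= t)%N ->
  qprod t (k + l) = qprod t k * x ^+ (k * l) * qprod (t - k) l.
Proof. by move=> k_le_t; rewrite /qprod big_split_ord -mulrA -qprod_fromE. Qed.

Lemma qprod_sym r d : (d <= r)%N ->
  qprod r (r - d) * qprod d d = qprod r d * qprod (r - d) (r - d).
Proof.
move=> d_le_r.
have := @qprodD r (r - d) d (leq_subr d r); rewrite subnK // subKn // => split1.
have := @qprodD r d (r - d) d_le_r; rewrite subnKC // mulnC split1 => /eqP.
rewrite -!mulrA ![x ^+ _ * _]mulrC !mulrA.
by rewrite (can2_eq (mulfK _) (divfK _)) ?expf_neq0 // mulfK ?expf_neq0 // => /eqP.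
Qed.

Lemma qbinom_mul_fiber n r d : (d <= r)%N -> (r <= n)%N -> qprod d d != 0 ->
  x ^+ (d * d) * qbinom r d * qbinom (n - r) d *
    (qprod (r - d) (r - d) * qprod_from r (r - d) d) =
  qprod r (r - d) * qprod_from n r d.
Proof.
move=> d_le_r r_le_n qdd_neq0.
rewrite /qbinom !qprod_fromE ?leq_subr // subKn //.
have -> : x ^+ (r * d) = x ^+ (d * d) * x ^+ ((r - d) * d).
  by rewrite -exprD -mulnDl subnKC.
have -> : qprod r (r - d) = qprod r d * qprod (r - d) (r - d) / qprod d d.
  by rewrite -qprod_sym // mulfK.
by field.
Qed.

End QProducts.

Section RealCounts.
Variables (R : realType) (F : finFieldType).
Local Open Scope ring_scope.
Local Notation q := #|F|.
Local Notation x := (#|F|%:R : R).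

Lemma q_gt1 : (1 < q)%N. Proof. exact: card_finNzRing_gt1. Qed.

Lemma x_gt1 : 1 < x. Proof. by rewrite ltr1n q_gt1. Qed.

Lemma qprod_from_nat_gt0 t a m : (a + m <= t)%N ->
  (0 < \prod_(j < m) (q ^ t - q ^ (a + j)))%N.
Proof.
move=> le_t; apply: prodn_gt0 => j; rewrite subn_gt0 ltn_exp2l ?q_gt1 //.
by have := ltn_ord j; lia.
Qed.

Lemma natr_qprod_from t a m : (a + m <= t)%N ->
  (\prod_(j < m) (q ^ t - q ^ (a + j)))%N%:R = qprod_from x t a m.
Proof.
move=> le_t; rewrite natr_prod; apply: eq_bigr => j _.
rewrite natrB ?natrX // leq_pexp2l ?(ltnW q_gt1) //.
by have := ltn_ord j; lia.
Qed.

Lemma natr_qprod t m : (m <= t)%N ->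
  (\prod_(j < m) (q ^ t - q ^ j))%N%:R = qprod x t m.
Proof. exact: (@natr_qprod_from t 0 m). Qed.

Lemma gauss_binomE m k : gauss_binom R q m k = qbinom x m k.
Proof. by rewrite /gauss_binom prodf_div. Qed.

Lemma gauss_binom_gt0 m k : (k <= m)%N -> 0 < gauss_binom R q m k.
Proof.
move=> k_le_m; apply: prodr_gt0 => j _.
have xj_lt : x ^+ j < x ^+ k by rewrite ltr_eXn2l ?x_gt1.
by rewrite divr_gt0 // subr_gt0 // (lt_le_trans xj_lt) // ler_eXn2l ?x_gt1.
Qed.

Lemma NC_gt0 n r d : (d <= r)%N -> (d <= n - r)%N -> 0 < NC R q n r d.
Proof.
by move=> d_le_r d_le_nr; rewrite !mulr_gt0 ?gauss_binom_gt0 ?exprn_gt0 ?ltr0n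
  ?(ltnW q_gt1).
Qed.

Lemma gauss_binom_card_Er n r : (r <= n)%N -> gauss_binom R q n r = #|Er F n r|%:R.
Proof.
move=> r_le_n.
rewrite gauss_binomE /qbinom -!natr_qprod // -(card_Er_mul F n r) natrM mulfK //.
by rewrite pnatr_eq0 -lt0n; exact: (@qprod_from_nat_gt0 r 0 r).
Qed.

Lemma NC_le_card_sphere n r (U : 'M[F]_n) d :
  U \in Er F n r -> (d <= r)%N -> (r + d <= n)%N ->
  NC R q n r d <= #|sphere r U d|%:R.
Proof.
move=> EU d_le_r rd_le_n.
have fiber_gt0 : 0 < (fiber_bound F r d)%:R :> R.
  by rewrite ltr0n muln_gt0 (@qprod_from_nat_gt0 (r - d) 0) // qprod_from_nat_gt0 ?subnK.
have qdd_neq0 : qprod x d d != 0.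
  by rewrite -natr_qprod // pnatr_eq0 -lt0n (@qprod_from_nat_gt0 d 0).
have fiberE : (fiber_bound F r d)%:R = qprod x (r - d) (r - d) * qprod_from x r (r - d) d.
  by rewrite natrM natr_qprod // natr_qprod_from ?subnK.
have framesE : #|sphere_frames r U d|%:R = qprod x r (r - d) * qprod_from x n r d.
  by rewrite card_sphere_frames // natrM natr_qprod ?leq_subr // natr_qprod_from.
rewrite -(ler_pM2r fiber_gt0) {1}fiberE /NC !gauss_binomE.
rewrite qbinom_mul_fiber ?(gt_eqF (lt_trans ltr01 x_gt1)) //; last lia.
by rewrite -framesE -natrM ler_nat card_sphere_frames_le.
Qed.

Lemma VC_le_card_ball n r (U : 'M[F]_n) t :
  U \in Er F n r -> (t <= r)%N -> (r + t <= n)%N ->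
  VC R q n r t <= #|[set c in Er F n r | (dI U c <= t)%N]|%:R.
Proof.
move=> EU t_le_r rt_le_n; rewrite card_ball natr_sum /VC !big_nat.
by apply: ler_sum => d /andP[_ d_le_t]; apply: NC_le_card_sphere => //; lia.
Qed.

End RealCounts.

Section GreedyCover.
Variables (T : finType) (E : {set T}) (B : T -> {set T}).
Hypothesis E_neq0 : E != finset.set0.

Definition uncovered (C : {set T}) := [set x in E | [forall c in C, x \notin B c]].

Lemma sum_card_setI (S : {set T}) :
  (\sum_(c in E) #|B c :&: S| = \sum_(x in S) #|[set c in E | x \in B c]|)%N.
Proof.
have card_sum (A : {set T}) P :
    #|[set x in A | P x]| = (\sum_(x in A) (P x : nat))%N.
  rewrite -sum1_card big_mkcond [RHS]big_mkcond /=.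
  by apply: eq_bigr => x _; rewrite !inE; case: (x \in A); case: (P x).
rewrite (eq_bigr (fun c => \sum_(x in S) (x \in B c : nat))%N); last first.
  by move=> c _; rewrite -card_sum; apply: eq_card => x; rewrite !inE andbC.
by rewrite exchange_big; apply: eq_bigr => x _; rewrite card_sum.
Qed.

Lemma exists_dense_center (S : {set T}) : exists2 c, c \in E &
  (\sum_(x in S) #|[set c in E | x \in B c]| <= #|B c :&: S| * #|E|)%N.
Proof.
have /set0Pn[c0 Ec0] := E_neq0.
have [c Ec c_max] := @arg_maxnP T c0 (mem E) (fun c => #|B c :&: S|) Ec0.
exists c => //; rewrite -sum_card_setI mulnC -sum_nat_const.
exact: leq_sum.
Qed.

Local Open Scope ring_scope.
Variables (R : realFieldType) (b : R).
Hypothesis b_le_deg : forall x, x \in E -> b <= #|[set c in E | x \in B c]|%:R.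

Lemma card_uncovered_greedy k : exists2 C : {set T},
  (C \subset E) && (#|C| <= k)%N &
  #|uncovered C|%:R <= #|E|%:R * (1 - b / #|E|%:R) ^+ k.
Proof.
have E_gt0 : 0 < #|E|%:R :> R by rewrite ltr0n card_gt0.
have ratio_ge0 : 0 <= 1 - b / #|E|%:R.
  have /set0Pn[x Ex] := E_neq0.
  rewrite subr_ge0 ler_pdivrMr // mul1r (le_trans (b_le_deg Ex)) // ler_nat.
  by apply/subset_leq_card/fintype.subsetP => c; rewrite inE => /andP[].
elim: k => [|k [C /andP[sCE C_le_k] IH]].
  exists finset.set0; first by rewrite finset.sub0set cards0.
  rewrite expr0 mulr1 ler_nat subset_leq_card //.
  by apply/fintype.subsetP => x; rewrite inE => /andP[].
set S := uncovered C; have [c Ec c_dense] := exists_dense_center S.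
exists (c |: C).
  by rewrite finset.subUset finset.sub1set Ec sCE cardsU1 (leq_add (leq_b1 _) C_le_k).
have -> : uncovered (c |: C) = S :\: B c.
  apply/setP => x; rewrite !inE andbCA; case: (x \in E) => //=.
  apply/forall_inP/andP => [x_unc | [x_notin_c /forall_inP x_unc] c'].
    split; last apply/forall_inP => c' c'C.
      by apply: x_unc; rewrite !inE eqxx.
    by apply: x_unc; rewrite !inE c'C orbT.
  by rewrite !inE => /orP[/eqP-> | /x_unc].
rewrite cardsD finset.setIC natrB ?subset_leq_card ?finset.subsetIr // exprS mulrCA.
apply: (le_trans _ (ler_wpM2l ratio_ge0 IH)).
rewrite mulrBl mul1r lerD2l lerN2 mulrAC ler_pdivrMr // -natrM.
apply: (le_trans _ (_ : (\sum_(x in S) #|[set c in E | x \in B c]|)%:R <= _)).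
  rewrite -sum1_card !natr_sum mulr_sumr; apply: ler_sum => x.
  by rewrite inE mulr1 => /andP[Ex _]; apply: b_le_deg.
by rewrite ler_nat.
Qed.

Lemma greedy_cover k : #|E|%:R * (1 - b / #|E|%:R) ^+ k < 1 ->
  exists2 C : {set T}, (C \subset E) && (#|C| <= k)%N &
    forall x, x \in E -> exists2 c, c \in C & x \in B c.
Proof.
move=> small; have [C CE unc_le] := card_uncovered_greedy k.
exists C => // x Ex; have : x \notin uncovered C.
  suff -> : uncovered C = finset.set0 by rewrite inE.
  by apply/eqP; rewrite -cards_eq0 -leqn0 -ltnS -(ltr_nat R) (le_lt_trans unc_le).
by rewrite inE Ex negb_forall_in => /exists_inP[c cC]; rewrite negbK; exists c.
Qed.

End GreedyCover.

Section StepCount.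
Local Open Scope ring_scope.

Lemma exists_steps_uncovered_lt1 (R : realType) (N V : R) : 1 <= V -> V < N ->
  exists k : nat,
    k%:R <= (1 - logb N (N - V))^-1 + 1 /\ N * (1 - V / N) ^+ k < 1.
Proof.
move=> V_ge1 V_lt_N.
have N_gt1 : 1 < N := le_lt_trans V_ge1 V_lt_N.
have N_gt0 : 0 < N := lt_trans ltr01 N_gt1.
have NV_gt0 : 0 < N - V by rewrite subr_gt0.
have lnN_gt0 : 0 < ln N by apply: ln_gt0.
have dln_gt0 : 0 < ln N - ln (N - V).
  by rewrite subr_gt0 ltr_ln ?posrE // ltrBlDr ltrDl (lt_le_trans ltr01).
set L := ln N / (ln N - ln (N - V)).
have -> : (1 - logb N (N - V))^-1 = L.
  by rewrite /logb /L; field; rewrite !gt_eqF.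
have L_ge0 : 0 <= L by rewrite divr_ge0 ?ltW.
exists (Num.truncn L).+1; split; first by rewrite -natr1 lerD2r truncn_le.
have ln_lt0 : ln (N * ((N - V) / N) ^+ (Num.truncn L).+1) < 0.
  rewrite lnM ?posrE ?exprn_gt0 ?divr_gt0 // lnXn ?divr_gt0 // ln_div ?posrE //.
  by rewrite -opprB mulNrn subr_lt0 -mulr_natl -ltr_pdivrMr // truncnS_gt.
have -> : 1 - V / N = (N - V) / N by rewrite mulrBl mulfV ?gt_eqF.
rewrite ltNge; apply/negP => /ln_ge0.
by rewrite leNgt ln_lt0.
Qed.

End StepCount.

Lemma covrad_le (F : finFieldType) n r rho (C : {set 'M[F]_n}) :
  (forall U, U \in Er F n r -> exists2 c, c \in C & (dI U c <= rho)%N) ->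
  (covrad r C <= rho)%N.
Proof.
move=> C_cov; apply/bigmax_leqP => U /C_cov[c cC dUc].
by apply: leq_trans dUc; rewrite -minEnat -leEnat; apply: bigmin_le_cond.
Qed.

Lemma KC_le_card_cover (F : finFieldType) n r rho (C : {set 'M[F]_n}) :
  C \subset Er F n r -> Er F n r != finset.set0 ->
  (forall U, U \in Er F n r -> exists2 c, c \in C & (dI U c <= rho)%N) ->
  (KC F n r rho <= #|C|)%N.
Proof.
move=> sCE /set0Pn[U EU] C_cov.
have C_neq0 : C != finset.set0 by have [c cC _] := C_cov U EU; apply/set0Pn; exists c.
rewrite /KC -minEnat -leEnat; apply: bigmin_le_cond.
by rewrite powersetE sCE C_neq0 leEnat (covrad_le C_cov).
Qed.

Section CoveringCounts.
Variables (R : realType) (F : finFieldType) (n r : nat).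
Hypothesis r_le_n : (r <= n)%N.
Local Open Scope ring_scope.
Local Notation q := #|F|.

Lemma card_Er_gt0 : (0 < #|Er F n r|)%N.
Proof.
have := @qprod_from_nat_gt0 F n 0 r r_le_n.
by rewrite -(card_Er_mul F n r) muln_gt0 => /andP[].
Qed.

Lemma VC_ge1 t : (t <= r)%N -> (t <= n - r)%N -> 1 <= VC R q n r t.
Proof.
move=> t_le_r t_le_nr; rewrite /VC big_ltn // {1}/NC /gauss_binom !big_ord0.
rewrite mul1r !mulr1 lerDl big_nat sumr_ge0 // => d /andP[_ d_le_t].
by rewrite ltW // NC_gt0; lia.
Qed.

Lemma VC_lt_card_Er t : (t < r)%N -> (r + r <= n)%N -> VC R q n r t < #|Er F n r|%:R.
Proof.
move=> t_lt_r rr_le_n.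
have /set0Pn[U EU] : Er F n r != finset.set0 by rewrite -card_gt0 card_Er_gt0.
apply: (@lt_le_trans _ _ (VC R q n r r)).
  have -> : VC R q n r r = VC R q n r t + \sum_(t.+1 <= d < r.+1) NC R q n r d.
    by rewrite /VC (big_cat_nat _ (n := t.+1)) // ltnS ltnW.
  rewrite ltrDl big_nat_recr //=.
  rewrite ltr_wpDl ?NC_gt0 //; last lia.
  by rewrite big_nat sumr_ge0 // => d /andP[_ d_lt_r]; rewrite ltW // NC_gt0; lia.
apply: le_trans (VC_le_card_ball R EU (leqnn r) rr_le_n) _.
by rewrite ler_nat subset_leq_card //; apply/fintype.subsetP => c; rewrite inE => /andP[].
Qed.

End CoveringCounts.

Theorem proposition8 (R : realType) (F : finFieldType) (n r rho : nat) :
  (r <= n./2)%N -> (0 < rho)%N -> (rho < r)%N ->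
  let q := #|F| in
  let G := gauss_binom R q n r in
  ((KC F n r rho)%:R <=
     (1 - logb G (G - VC R q n r rho))^-1 + 1)%R.
Proof.
move=> r_le_half _ rho_lt_r; cbv zeta.
have rr_le_n : (r + r <= n)%N by move: r_le_half; rewrite geq_half_double -addnn.
have r_le_n : (r <= n)%N by lia.
rewrite gauss_binom_card_Er //.
have rho_le_r := ltnW rho_lt_r.
have rho_le_nr : (rho <= n - r)%N by lia.
have rrho_le_n : (r + rho <= n)%N by lia.
have [k [k_le k_small]] := exists_steps_uncovered_lt1
  (VC_ge1 R F r_le_n rho_le_r rho_le_nr) (VC_lt_card_Er R F r_le_n rho_lt_r rr_le_n).
pose ball c := [set W in Er F n r | (dI W c <= rho)%N].
have deg_ge : forall U, U \in Er F n r ->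
    (VC R #|F| n r rho <= #|[set c in Er F n r | U \in ball c]|%:R)%R.
  move=> U EU; apply: le_trans (VC_le_card_ball R EU rho_le_r rrho_le_n) _.
  by rewrite ler_nat; apply/eq_leq/eq_card => c; move: EU; rewrite !inE => /andP[-> ->].
have Er_neq0 : Er F n r != finset.set0 by rewrite -card_gt0 card_Er_gt0.
have [C /andP[sCE C_le_k] C_cov] := greedy_cover Er_neq0 deg_ge k_small.
apply: (le_trans _ k_le); rewrite ler_nat (leq_trans _ C_le_k) //.
apply: KC_le_card_cover => // U /C_cov[c cC].
by rewrite inE => /andP[_ dUc]; exists c.
Qed.
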